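(* Consider a finite reward-free MDP with occupancy polytope $\Phi$ and fix $d_e^\star\in\Phi$. There exists a constant $C>0$, depending only on the reward-free MDP (with $d_e^\star$ fixed), such that for every dataset $\mathcal D=\{(d_e^k,\epsilon^k)\}_{k=1}^K$ ($d_e^k\in\Phi$, $\epsilon^k\ge0$) with $\mathcal R(\mathcal D)\neq\emptyset$, \[d_H\big(\mathcal R(\mathcal D)\mid\mathcal R(d_e^\star)\big)\le C\,\mathrm{Gap}\big(\mathcal R(\mathcal D),\mathcal R(d_e^\star)\big).\] In particular, $\mathrm{Gap}(\mathcal R(\mathcal D),\mathcal R(d_e^\star))\to0$ implies $d_H(\mathcal R(\mathcal D)\mid\mathcal R(d_e^\star))\to0$.
   Context: The MDP has finite $S$, $A$, transitions $P$, initial distribution $\mu_0$, discount $\gamma\in(0,1)$; $(Md)(s)=\sum_a d(s,a)-\gamma\sum_{s',a'}P(s\mid s',a')d(s',a')$ and $\Phi=\{d\ge0:Md=(1-\gamma)\mu_0\}$. Rewards are $r\in\Delta(S\times A)$. $\mathrm{subopt}(r,d):=\max_{\tilde d\in\Phi}r^\top\tilde d-r^\top d$. $\mathcal R(\mathcal D):=\{r\in\Delta(S\times A):\mathrm{subopt}(r,d_e^k)\le\epsilon^k\ \forall k\}$; $\mathcal R(d_e^\star):=\{r\in\Delta(S\times A):\mathrm{subopt}(r,d_e^\star)=0\}$. $\mathrm{Gap}(\mathcal R,\mathcal R(d_e^\star)):=\max_{r\in\mathcal R}\mathrm{subopt}(r,d_e^\star)$. For nonempty $A',B\subset\mathbb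 R^m$, $d_H(A'\mid B):=\sup_{x\in A'}\inf_{y\in B}\|x-y\|_\infty$. *)

From HB Require Import structures.
From mathcomp Require Import all_boot all_order all_algebra.
From mathcomp Require Import all_classical all_reals.
Set Implicit Arguments. Unset Strict Implicit. Unset Printing Implicit Defensive.
Import Order.TTheory GRing.Theory Num.Theory.
Local Open Scope classical_set_scope.
Local Open Scope ring_scope.

Section MDP.
Variables (R : realType) (S A : finType).

Definition sa_vec := (S * A)%type -> R.

(* transition kernel: P s' a s = P(s | s', a) *)
Definition is_kernel (P : S -> A -> S -> R) : Prop :=
  (forall s' a s, 0 <= P s' a s) /\ (forall s' a, \sum_(s : S) P s' a s = 1).

Definition is_dist_S (mu : S -> R) : Prop :=
  (forall s, 0 <= mu s) /\ \sum_(s : S) mu s = 1.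

Definition flowM (P : S -> A -> S -> R) (gamma : R) (d : sa_vec) (s : S) : R :=
  \sum_(a : A) d (s, a) - gamma * \sum_(p : S * A) P p.1 p.2 s * d p.

Definition Phi (P : S -> A -> S -> R) (mu0 : S -> R) (gamma : R) : set sa_vec :=
  [set d | (forall p, 0 <= d p) /\
           (forall s, flowM P gamma d s = (1 - gamma) * mu0 s)].

Definition dotv (r d : sa_vec) : R := \sum_(p : S * A) r p * d p.

Definition simplex : set sa_vec :=
  [set r | (forall p, 0 <= r p) /\ \sum_(p : S * A) r p = 1].

Definition subopt P mu0 gamma (r d : sa_vec) : R :=
  sup [set dotv r dt | dt in Phi P mu0 gamma] - dotv r d.

Definition feasR P mu0 gamma (K : nat) (dk : 'I_K -> sa_vec) (epsk : 'I_K -> R)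
  : set sa_vec :=
  [set r | simplex r /\ (forall k, subopt P mu0 gamma r (dk k) <= epsk k)].

Definition feasRstar P mu0 gamma (dstar : sa_vec) : set sa_vec :=
  [set r | simplex r /\ subopt P mu0 gamma r dstar = 0].

Definition Gap P mu0 gamma (Rset : set sa_vec) (dstar : sa_vec) : R :=
  sup [set subopt P mu0 gamma r dstar | r in Rset].

Definition dinf (x y : sa_vec) : R := \big[Num.max/0]_(p : S * A) `|x p - y p|.

Definition dH (A' B : set sa_vec) : R :=
  sup [set inf [set dinf x y | y in B] | x in A'].

End MDP.

From HB Require Import structures.
From mathcomp Require Import all_boot all_order all_algebra.
From mathcomp Require Import all_classical all_reals.
From mathcomp Require Import ring lra.
Set Implicit Arguments. Unset Strict Implicit.
Import Order.TTheory GRing.Theory Num.Theory.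
Local Open Scope classical_set_scope.
Local Open Scope ring_scope.

(* Fix a reward r in the simplex.  Maximising the total value over the finitely
   many deterministic policies yields a value function V with no improving
   action: the advantage adv r V (s, a) = r (s, a) + gamma * (P V) (s, a) - V s
   is nonpositive and vanishes along the optimal policy.  For every occupancy
   measure d, r^T d = (1 - gamma) mu0^T V + d^T adv, and the occupancy measure
   of the optimal policy attains the bound, so subopt r d* = - d*^T adv.
   Raising r by the deficit - adv on the support of d* and renormalising gives
   a reward r' for which d* is optimal; each deficit is at most
   subopt r d* / d*(p), whence |r - r'|_oo <= C * subopt r d*.  Taking the
   supremum over R(D) bounds d_H by C * Gap. *)

Section DiscountedSystems.
Variables (R : realType) (I : finType) (Q : I -> I -> R) (g : R).
Hypotheses (Q_ge0 : forall i j, 0 <= Q i j) (Q_sum1 : forall i, \sum_j Q i j = 1).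
Hypotheses (g_ge0 : 0 <= g) (g_lt1 : g < 1).

Lemma discounted_min_principle (x : I -> R) :
  (forall i, g * \sum_j Q i j * x j <= x i) -> forall i, 0 <= x i.
Proof.
move=> hx i; have [m _ min_m] := @arg_minP _ _ I i predT x isT.
apply: le_trans (min_m i isT); rewrite leNgt; apply/negP => xm_lt0.
have avg_ge : x m <= \sum_j Q m j * x j.
  rewrite -[leLHS]mul1r -(Q_sum1 m) mulr_suml; apply: ler_sum => j _.
  by rewrite ler_wpM2l // min_m.
have := hx m; have := ler_wpM2l g_ge0 avg_ge => g_avg_ge avg_le.
have : 0 < (1 - g) * (- x m) by rewrite mulr_gt0 // ?subr_gt0 ?oppr_gt0.
lra.
Qed.

(* The negative part n of y satisfies n <= g * n Q entrywise; summing over the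
   columns and using the unit row sums of Q gives sum n <= g * sum n. *)
Lemma discounted_row_ge0 (b y : I -> R) : (forall j, 0 <= b j) ->
  (forall j, y j = b j + g * \sum_i y i * Q i j) -> forall j, 0 <= y j.
Proof.
move=> b_ge0 hy.
pose n j := Num.max 0 (- y j).
have n_ge0 j : 0 <= n j by rewrite le_max lexx.
have n_le j : n j <= g * \sum_i n i * Q i j.
  have rhs_ge0 : 0 <= g * \sum_i n i * Q i j.
    by rewrite mulr_ge0 // sumr_ge0 // => i _; rewrite mulr_ge0.
  rewrite ge_max rhs_ge0 /= hy opprD.
  have : - (g * \sum_i y i * Q i j) <= g * \sum_i n i * Q i j.
    rewrite -mulrN -sumrN ler_wpM2l // ler_sum // => i _.
    by rewrite -mulNr ler_wpM2r // le_max lexx orbT.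
  have := b_ge0 j; lra.
have sum_n : \sum_j n j <= g * \sum_j n j.
  apply: le_trans (ler_sum _ (fun j _ => n_le j)) _.
  rewrite -mulr_sumr exchange_big /= le_eqVlt; apply/orP; left; apply/eqP.
  by congr (g * _); apply: eq_bigr => i _; rewrite -mulr_sumr Q_sum1 mulr1.
have sum_n0 : \sum_j n j = 0.
  apply/eqP; rewrite eq_le sumr_ge0 // andbT.
  have : (1 - g) * \sum_j n j <= 0 by rewrite mulrBl mul1r subr_le0.
  by rewrite pmulr_rle0 // subr_gt0.
move=> j; have := n_ge0 j; have : n j <= 0.
  by rewrite -sum_n0 (bigD1 j) //= lerDl sumr_ge0.
rewrite /n ge_max => /andP[_]; lra.
Qed.

Lemma sum_enum_val (F : I -> R) : \sum_(j < #|I|) F (enum_val j) = \sum_j F j.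
Proof. by rewrite -big_enum_val. Qed.

Definition discount_mx : 'M[R]_#|I| :=
  1%:M - g *: \matrix_(i, j) Q (enum_val i) (enum_val j).

Lemma discount_mx_col (x : 'cV[R]_#|I|) i :
  (discount_mx *m x) i 0 = x i 0 - g * \sum_j Q (enum_val i) j * x (enum_rank j) 0.
Proof.
rewrite mulmxBl mul1mx -scalemxAl !mxE -[in RHS]sum_enum_val.
by congr (_ - g * _); apply: eq_bigr => j _; rewrite !mxE enum_valK.
Qed.

Lemma discount_mx_row (y : 'rV[R]_#|I|) j :
  (y *m discount_mx) 0 j = y 0 j - g * \sum_i y 0 (enum_rank i) * Q i (enum_val j).
Proof.
rewrite mulmxBr mulmx1 -scalemxAr !mxE -[in RHS]sum_enum_val.
by congr (_ - g * _); apply: eq_bigr => i _; rewrite !mxE enum_valK.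
Qed.

(* A kernel vector x = g Q x satisfies the minimum principle, and so does - x. *)
Lemma discount_mx_unit : discount_mx \in unitmx.
Proof.
rewrite -unitmx_tr -row_free_unit -kermx_eq0; apply/eqP/row_matrixP => k.
rewrite row0; set v := row k _.
have /sub_kermxP vM0 : (v <= kermx discount_mx^T)%MS by exact: row_sub.
clearbody v.
have Mv0 : discount_mx *m v^T = 0.
  by rewrite -[discount_mx]trmxK -trmx_mul vM0 trmx0.
pose x (i : I) : R := v 0 (enum_rank i).
have x_fix i : x i = g * \sum_j Q i j * x j.
  rewrite /x; have /eqP := congr1 (fun w : 'cV_#|I| => w (enum_rank i) 0) Mv0.
  rewrite discount_mx_col !mxE enum_rankK subr_eq0 => /eqP ->.
  by congr (g * _); apply: eq_bigr => j _; rewrite mxE.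
have x_ge0 : forall i, 0 <= x i.
  by apply: discounted_min_principle => i; rewrite -x_fix.
have Nx_ge0 : forall i, 0 <= - x i.
  apply: discounted_min_principle => i.
  by under eq_bigr do rewrite mulrN; rewrite sumrN mulrN -x_fix.
apply/rowP => j; rewrite !mxE; apply/eqP; rewrite eq_le.
have := x_ge0 (enum_val j); have := Nx_ge0 (enum_val j).
by rewrite /x enum_valK oppr_ge0 => -> ->.
Qed.

Lemma discounted_col_solvable (b : I -> R) :
  exists x : I -> R, forall i, x i = b i + g * \sum_j Q i j * x j.
Proof.
pose x := invmx discount_mx *m \col_i b (enum_val i).
exists (fun i => x (enum_rank i) 0) => i.
have := congr1 (fun w : 'cV_#|I| => w (enum_rank i) 0)
  (mulKVmx discount_mx_unit (\col_i b (enum_val i))).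
by rewrite discount_mx_col !mxE enum_rankK => <-; ring.
Qed.

Lemma discounted_row_solvable (b : I -> R) :
  exists y : I -> R, forall j, y j = b j + g * \sum_i y i * Q i j.
Proof.
pose y := \row_j b (enum_val j) *m invmx discount_mx.
exists (fun j => y 0 (enum_rank j)) => j.
have := congr1 (fun w : 'rV_#|I| => w 0 (enum_rank j))
  (mulmxKV discount_mx_unit (\row_j b (enum_val j))).
by rewrite discount_mx_row !mxE enum_rankK => <-; ring.
Qed.

End DiscountedSystems.

Lemma le_sum_nonneg (R : numDomainType) (I : finType) (F : I -> R) i :
  (forall j, 0 <= F j) -> F i <= \sum_j F j.
Proof. by move=> F_ge0; rewrite (bigD1 i) //= lerDl sumr_ge0. Qed.

Lemma normalize_shift_dist (R : realFieldType) (I : finType) (r e : I -> R) (i : I) :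
  (forall j, 0 <= e j) -> 0 <= r i <= 1 ->
  `|r i - (r i + e i) / (1 + \sum_j e j)| <= \sum_j e j + e i.
Proof.
move=> e_ge0 /andP[ri_ge0 ri_le1]; set T := \sum_j e j.
have T_ge0 : 0 <= T by rewrite sumr_ge0.
have ei_ge0 := e_ge0 i.
have den_gt0 : 0 < 1 + T by lra.
have -> : r i - (r i + e i) / (1 + T) = (r i * T - e i) / (1 + T).
  by field; rewrite gt_eqF.
have riT_ge0 : 0 <= r i * T by rewrite mulr_ge0.
have riT_le : r i * T <= T by rewrite ler_piMl.
have sq_ge0 : 0 <= (T + e i) * T by rewrite mulr_ge0 ?addr_ge0.
rewrite normf_div (gtr0_norm den_gt0) ler_pdivrMr // ler_norml mulrDr mulr1.
by apply/andP; split; lra.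
Qed.

Lemma dinf_ge0 (R : realType) (S A : finType) (x y : sa_vec R S A) : 0 <= dinf x y.
Proof. by rewrite /dinf; elim/big_ind: _ => // a b a_ge0 b_ge0; rewrite le_max a_ge0. Qed.

Lemma dinf_le (R : realType) (S A : finType) (x y : sa_vec R S A) (c : R) :
  0 <= c -> (forall p, `|x p - y p| <= c) -> dinf x y <= c.
Proof. by move=> c_ge0 xy_le; apply: bigmax_le. Qed.

Section MDP.
Variables (R : realType) (S A : finType).
Variables (P : S -> A -> S -> R) (mu0 : S -> R) (gamma : R).
Hypotheses (P_kernel : is_kernel P) (mu0_dist : is_dist_S mu0).
Hypotheses (gamma_ge0 : 0 <= gamma) (gamma_lt1 : gamma < 1).

Local Notation vec := (sa_vec R S A).
Local Notation Phi := (Phi P mu0 gamma).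
Local Notation subopt := (subopt P mu0 gamma).

Definition adv (r : vec) (V : S -> R) (p : S * A) : R :=
  r p + gamma * \sum_s P p.1 p.2 s * V s - V p.1.

Definition init_value (V : S -> R) : R := (1 - gamma) * \sum_s mu0 s * V s.

Lemma sum_pair (F : S * A -> R) : \sum_s \sum_a F (s, a) = \sum_p F p.
Proof. by rewrite pair_bigA; apply: eq_bigr => -[]. Qed.

Lemma flowM_adjoint (V : S -> R) (d : vec) :
  \sum_s V s * flowM P gamma d s =
  \sum_p d p * (V p.1 - gamma * \sum_s P p.1 p.2 s * V s).
Proof.
under eq_bigr do rewrite /flowM mulrBr mulrCA !mulr_sumr.
under [RHS]eq_bigr do rewrite mulrBr.
rewrite !sumrB; congr (_ - _).
  by rewrite -sum_pair; apply: eq_bigr => s _; apply: eq_bigr => a _; rewrite mulrC.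
rewrite exchange_big; apply: eq_bigr => p _ /=.
by rewrite mulrA mulr_sumr; apply: eq_bigr => s _; ring.
Qed.

Lemma dotv_adv (r : vec) (V : S -> R) (d : vec) :
  Phi d -> dotv r d = init_value V + \sum_p d p * adv r V p.
Proof.
move=> [_ d_flow].
have flow_sum : \sum_s V s * flowM P gamma d s = init_value V.
  by rewrite /init_value mulr_sumr; apply: eq_bigr => s _; rewrite d_flow; ring.
have -> : \sum_p d p * adv r V p =
    dotv r d - \sum_p d p * (V p.1 - gamma * \sum_s P p.1 p.2 s * V s).
  by rewrite /dotv -sumrB; apply: eq_bigr => p _; rewrite /adv; ring.
by rewrite -flowM_adjoint flow_sum; ring.
Qed.

Lemma mass_Phi (d : vec) : Phi d -> \sum_p d p = 1.
Proof.
have [_ P_sum1] := P_kernel; have [_ mu0_sum1] := mu0_dist; move=> [_ d_flow].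
have := flowM_adjoint (fun=> 1) d.
under eq_bigr do rewrite mul1r d_flow.
under [RHS]eq_bigr do under eq_bigr do rewrite mulr1.
under [RHS]eq_bigr do rewrite P_sum1 mulr1.
rewrite -mulr_sumr mu0_sum1 mulr1 -mulr_suml => mass_eq.
apply: (mulIf (x := 1 - gamma)); first by rewrite subr_eq0 gt_eqF.
by rewrite -mass_eq mul1r.
Qed.

Lemma Phi_inhabited_actions (d : vec) : Phi d -> inhabited A.
Proof.
move=> /mass_Phi; case: (pickP (@predT (S * A))) => [[_ a] _|none]; first by [].
rewrite big1 => [/eqP|p _]; last by have := none p.
by rewrite eq_sym oner_eq0.
Qed.

Lemma dotv_bounds (r d : vec) : simplex r -> Phi d -> 0 <= dotv r d <= 1.
Proof.
move=> [r_ge0 r_sum1] d_Phi; have d_ge0 := d_Phi.1.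
rewrite sumr_ge0 => [|p _]; last exact: mulr_ge0.
rewrite -(mass_Phi d_Phi) ler_sum // => p _; rewrite ler_piMl //.
by rewrite -r_sum1 le_sum_nonneg.
Qed.

Lemma subopt_bounds (r d : vec) : simplex r -> Phi d -> 0 <= subopt r d <= 1.
Proof.
move=> r_simplex d_Phi.
have values_ub : ubound [set dotv r dt | dt in Phi] 1.
  by move=> _ [dt dt_Phi <-]; case/andP: (dotv_bounds r_simplex dt_Phi).
have values_d : [set dotv r dt | dt in Phi] (dotv r d) by exists d.
have le_sup : dotv r d <= sup [set dotv r dt | dt in Phi].
  by apply: ub_le_sup => //; exists 1.
have sup_le1 : sup [set dotv r dt | dt in Phi] <= 1.
  by apply: ge_sup => //; exists (dotv r d).
have /andP[dot_ge0 _] := dotv_bounds r_simplex d_Phi.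
by rewrite /subopt subr_ge0 le_sup /=; lra.
Qed.

Lemma sup_dotv_adv (r : vec) (V : S -> R) (d0 : vec) :
  (forall p, adv r V p <= 0) -> Phi d0 -> \sum_p d0 p * adv r V p = 0 ->
  sup [set dotv r d | d in Phi] = init_value V.
Proof.
move=> adv_le0 d0_Phi d0_adv.
have values_ub : ubound [set dotv r d | d in Phi] (init_value V).
  move=> _ [d d_Phi <-]; rewrite (dotv_adv r V d_Phi) gerDl.
  by rewrite sumr_le0 // => p _; rewrite mulr_ge0_le0 // d_Phi.1.
apply/eqP; rewrite eq_le ge_sup //=; last by exists (dotv r d0), d0.
apply: ub_le_sup; first by exists (init_value V).
by exists d0; rewrite // (dotv_adv r V d0_Phi) d0_adv addr0.
Qed.

Lemma subopt_adv (r : vec) (V : S -> R) (d0 d : vec) :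
  (forall p, adv r V p <= 0) -> Phi d0 -> \sum_p d0 p * adv r V p = 0 ->
  Phi d -> subopt r d = - \sum_p d p * adv r V p.
Proof.
move=> adv_le0 d0_Phi d0_adv d_Phi.
by rewrite /subopt (sup_dotv_adv adv_le0 d0_Phi d0_adv) (dotv_adv r V d_Phi); ring.
Qed.

Lemma policy_kernel_ge0 (pi : {ffun S -> A}) s t : 0 <= P s (pi s) t.
Proof. exact: P_kernel.1. Qed.

Lemma policy_kernel_sum1 (pi : {ffun S -> A}) s : \sum_t P s (pi s) t = 1.
Proof. exact: P_kernel.2. Qed.

Lemma adv_policy_diff (r : vec) (pi : {ffun S -> A}) (V V' : S -> R) :
  (forall s, adv r V' (s, pi s) = 0) -> forall s,
  V' s - V s = adv r V (s, pi s) + gamma * \sum_t P s (pi s) t * (V' t - V t).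
Proof.
move=> V'_pi s; have := V'_pi s; rewrite /adv /= => V'_eq.
have -> : \sum_t P s (pi s) t * (V' t - V t) =
    \sum_t P s (pi s) t * V' t - \sum_t P s (pi s) t * V t.
  by rewrite -sumrB; apply: eq_bigr => t _; rewrite mulrBr.
by rewrite mulrBr; lra.
Qed.

Lemma policy_value_exists (r : vec) (pi : {ffun S -> A}) :
  exists V : S -> R, forall s, adv r V (s, pi s) = 0.
Proof.
have [V V_eq] := discounted_col_solvable (policy_kernel_ge0 pi)
  (policy_kernel_sum1 pi) gamma_ge0 gamma_lt1 (fun s => r (s, pi s)).
by exists V => s; rewrite /adv /= V_eq; ring.
Qed.

Lemma occupancy_exists (pi : {ffun S -> A}) :
  exists2 d, Phi d & forall s a, a != pi s -> d (s, a) = 0.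
Proof.
have [mu0_ge0 _] := mu0_dist.
have Ppi_ge0 := policy_kernel_ge0 pi; have Ppi_sum1 := policy_kernel_sum1 pi.
have [nu nu_eq] := discounted_row_solvable Ppi_ge0 Ppi_sum1 gamma_ge0 gamma_lt1
  (fun s => (1 - gamma) * mu0 s).
have mu0_weight s : 0 <= (1 - gamma) * mu0 s.
  by rewrite mulr_ge0 // subr_ge0 ltW.
have nu_ge0 := discounted_row_ge0 Ppi_ge0 Ppi_sum1 gamma_ge0 gamma_lt1
  mu0_weight nu_eq.
pose d (p : S * A) : R := if p.2 == pi p.1 then nu p.1 else 0.
have sum_d_at s (F : A -> R) : \sum_a (if a == pi s then F a else 0) = F (pi s).
  by rewrite (bigD1 (pi s)) //= eqxx big1 ?addr0 // => a /negPf ->.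
have d_row s : \sum_a d (s, a) = nu s by exact: (sum_d_at s (fun=> nu s)).
have d_col s : \sum_p P p.1 p.2 s * d p = \sum_t nu t * P t (pi t) s.
  rewrite -sum_pair; apply: eq_bigr => t _.
  rewrite -(sum_d_at t (fun a => nu t * P t a s)); apply: eq_bigr => a _.
  by rewrite /d /=; case: ifP => _; [exact: mulrC | exact: mulr0].
exists d => [|s a /negPf]; last by rewrite /d /= => ->.
split=> [[s a]|s]; first by rewrite /d /=; case: ifP.
by rewrite /flowM d_row d_col nu_eq; ring.
Qed.

(* Among the finitely many deterministic policies, one maximising the total
   value [\sum_s V^pi s] admits no improving action. *)
Lemma optimal_policy_exists (r : vec) (a0 : A) :
  exists (pi : {ffun S -> A}) V,
    (forall s, adv r V (s, pi s) = 0) /\ forall p, adv r V p <= 0.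
Proof.
have [value value_eq] := choice (policy_value_exists r).
pose pis := [arg max_(pi > [ffun=> a0]) \sum_s value pi s]%O.
have pis_max pi : \sum_s value pi s <= \sum_s value pis s.
  by rewrite /pis; case: arg_maxP => //= pi' _; apply.
exists pis, (value pis); split => // -[s1 a1]; rewrite leNgt; apply/negP => adv_pos.
pose pi' : {ffun S -> A} := [ffun s => if s == s1 then a1 else pis s].
pose w s := value pi' s - value pis s.
have w_eq := adv_policy_diff (value pis) (value_eq pi').
have adv_pi'_ge0 s : 0 <= adv r (value pis) (s, pi' s).
  by rewrite /pi' ffunE; case: eqP => [-> | _]; [exact: ltW | rewrite value_eq].
have w_ge0 : forall s, 0 <= w s.
  apply: (discounted_min_principle (policy_kernel_ge0 pi') (policy_kernel_sum1 pi')
    gamma_ge0 gamma_lt1) => s.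
  by rewrite [leRHS]w_eq lerDr.
have w_s1 : 0 < w s1.
  rewrite /w w_eq /pi' ffunE eqxx ltr_pwDl //.
  rewrite mulr_ge0 // sumr_ge0 // => t _.
  by apply: mulr_ge0; [exact: P_kernel.1 | exact: w_ge0].
have : \sum_s value pis s < \sum_s value pi' s.
  rewrite -subr_gt0 -sumrB (bigD1 s1) //= (lt_le_trans w_s1) // lerDl.
  by rewrite sumr_ge0 // => s _; exact: w_ge0.
by rewrite ltNge pis_max.
Qed.

Lemma subopt_optimal (r : vec) (a0 : A) : exists V : S -> R,
  (forall p, adv r V p <= 0) /\ forall d, Phi d -> subopt r d = - \sum_p d p * adv r V p.
Proof.
have [pi [V [adv_pi adv_le0]]] := optimal_policy_exists r a0.
have [d0 d0_Phi d0_pi] := occupancy_exists pi.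
exists V; split => // d; apply: subopt_adv adv_le0 d0_Phi _.
apply: big1 => -[s a] _; have [-> | /d0_pi ->] := eqVneq a (pi s).
  by rewrite adv_pi mulr0.
by rewrite mul0r.
Qed.

Lemma adv_shift_scale (r e : vec) (V : S -> R) (c : R) p :
  adv (fun q => (r q + e q) / c) (fun s => V s / c) p = (adv r V p + e p) / c.
Proof. by rewrite /adv; under eq_bigr do rewrite mulrA; rewrite -mulr_suml; ring. Qed.

Variable dstar : vec.
Hypothesis dstar_Phi : Phi dstar.

Lemma feasRstar_of_adv (r : vec) (V : S -> R) : simplex r ->
  (forall p, adv r V p <= 0) -> (forall p, 0 < dstar p -> adv r V p = 0) ->
  feasRstar P mu0 gamma dstar r.
Proof.
move=> r_simplex adv_le0 adv_supp.
have dstar_adv0 : \sum_p dstar p * adv r V p = 0.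
  apply: big1 => p _; have := dstar_Phi.1 p.
  by rewrite le_eqVlt => /orP[/eqP <- | /adv_supp ->]; rewrite ?mul0r ?mulr0.
by split; rewrite // (subopt_adv adv_le0 dstar_Phi dstar_adv0 dstar_Phi) dstar_adv0 oppr0.
Qed.

Lemma adv_deficit_le (r : vec) (V : S -> R) p :
  (forall q, adv r V q <= 0) -> subopt r dstar = - \sum_q dstar q * adv r V q ->
  0 < dstar p -> - adv r V p <= subopt r dstar / dstar p.
Proof.
move=> adv_le0 subopt_eq dp_gt0.
rewrite ler_pdivlMr // mulNr mulrC subopt_eq -sumrN.
apply: (le_sum_nonneg (F := fun q => - (dstar q * adv r V q)) p) => q.
by rewrite -mulrN mulr_ge0 ?oppr_ge0 // dstar_Phi.1.
Qed.

Definition posinv (x : R) : R := if 0 < x then x^-1 else 0.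

Lemma posinv_ge0 x : 0 <= posinv x.
Proof. by rewrite /posinv; case: ifP => // /ltW; rewrite invr_ge0. Qed.

(* Each deficit is at most subopt r d* * posinv (d* p) (adv_deficit_le), and
   renormalising costs the total deficit, at most #|S * A| times as much. *)
Definition gap_const : R :=
  (#|{: S * A}|%:R + 1) * (\sum_p posinv (dstar p) + 1).

Lemma gap_const_gt0 : 0 < gap_const.
Proof. by rewrite mulr_gt0 // ltr_wpDl // sumr_ge0 // => p _; exact: posinv_ge0. Qed.

Lemma near_feasRstar (r : vec) : simplex r ->
  exists2 r2, feasRstar P mu0 gamma dstar r2 &
    forall p, `|r p - r2 p| <= gap_const * subopt r dstar.
Proof.
move=> r_simplex; have [r_ge0 r_sum1] := r_simplex.
have [a0] := Phi_inhabited_actions dstar_Phi.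
have [V [adv_le0 subopt_eq]] := subopt_optimal r a0.
set eps := subopt r dstar.
have eps_ge0 : 0 <= eps by case/andP: (subopt_bounds r_simplex dstar_Phi).
pose e p := if 0 < dstar p then - adv r V p else 0.
have e_ge0 p : 0 <= e p by rewrite /e; case: ifP; rewrite // oppr_ge0.
have e_le p : e p <= eps * \sum_q posinv (dstar q).
  apply: le_trans _ (ler_wpM2l eps_ge0 (le_sum_nonneg p (fun q => posinv_ge0 (dstar q)))).
  rewrite /e /posinv; case: ifP => [dp_gt0|_]; last by rewrite mulr0.
  exact: adv_deficit_le (subopt_eq _ dstar_Phi) dp_gt0.
pose T := \sum_p e p.
have T_ge0 : 0 <= T by rewrite sumr_ge0.
have T_le : T <= #|{: S * A}|%:R * (eps * \sum_q posinv (dstar q)).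
  by apply: le_trans (ler_sum _ (fun p _ => e_le p)) _; rewrite sumr_const mulr_natl.
exists (fun q => (r q + e q) / (1 + T)).
  apply: (feasRstar_of_adv (V := fun s => V s / (1 + T))).
  - split=> [q|]; first by rewrite divr_ge0 ?addr_ge0.
    by rewrite -mulr_suml big_split /= r_sum1 divff // gt_eqF // ltr_pwDl.
  - move=> q; rewrite adv_shift_scale ler_pdivrMr ?mul0r ?ltr_pwDl // /e.
    by case: ifP => _; rewrite ?subrr ?addr0.
  - by move=> q dq_gt0; rewrite adv_shift_scale /e dq_gt0 subrr mul0r.
move=> p; have rp_le1 : r p <= 1 by rewrite -r_sum1 le_sum_nonneg.
apply: le_trans (normalize_shift_dist (i := p) e_ge0 _) _; first by rewrite r_ge0.
have Dst_ge0 : 0 <= \sum_q posinv (dstar q).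
  by rewrite sumr_ge0 // => q _; exact: posinv_ge0.
have N_eps : 0 <= #|{: S * A}|%:R * eps by rewrite mulr_ge0.
have := e_le p; rewrite /gap_const -/T; nra.
Qed.

End MDP.

Theorem mainTheorem6 (R : realType) (S A : finType)
  (P : S -> A -> S -> R) (mu0 : S -> R) (gamma : R)
  (hP : is_kernel P) (hmu0 : is_dist_S mu0)
  (hgamma0 : 0 < gamma) (hgamma1 : gamma < 1)
  (dstar : sa_vec R S A) (hdstar : Phi P mu0 gamma dstar) :
  exists C : R, 0 < C /\
    forall (K : nat) (dk : 'I_K -> sa_vec R S A) (epsk : 'I_K -> R),
      (0 < K)%N ->
      (forall k, Phi P mu0 gamma (dk k)) ->
      (forall k, 0 <= epsk k) ->
      feasR P mu0 gamma dk epsk !=set0 ->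
      dH (feasR P mu0 gamma dk epsk) (feasRstar P mu0 gamma dstar)
        <= C * Gap P mu0 gamma (feasR P mu0 gamma dk epsk) dstar.
Proof.
have C_gt0 := gap_const_gt0 dstar.
have subopt01 r : simplex r -> 0 <= subopt P mu0 gamma r dstar <= 1.
  by move=> r_simplex; have := subopt_bounds hP hmu0 hgamma1 r_simplex hdstar.
exists (gap_const dstar); split => // K dk epsk _ _ _ [x0 x0_feas].
have Gap_ub :
    has_ubound [set subopt P mu0 gamma r dstar | r in feasR P mu0 gamma dk epsk].
  by exists 1 => _ [r [/subopt01 /andP[_ subopt_le1] _] <-].
apply: ge_sup => [|_ [x x_feas <-]]; first by eexists; exists x0.
have [r2 r2_feas x_r2] := near_feasRstar hP hmu0 (ltW hgamma0) hgamma1 hdstar x_feas.1.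
have /andP[subopt_ge0 _] := subopt01 x x_feas.1.
apply: (@le_trans _ _ (dinf x r2)).
  by apply: ge_inf; [exists 0 => _ [y _ <-]; exact: dinf_ge0 | exists r2].
apply: le_trans (dinf_le (mulr_ge0 (ltW C_gt0) subopt_ge0) x_r2) _.
by rewrite ler_pM2l //; apply: ub_le_sup => //; exists x.
Qed.
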